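(* In the one-path setting with groups $\mathcal{G}$ and junction trees $H_g$ as below, every vertex of $V(E^* )\setminus V(P)$ and every edge of $E^*\setminus E(P)$ belongs to at most $10\lfloor\log_2|P|\rfloor+12$ of the graphs $H_g$, $g\in\mathcal{G}$.
   Context: One-path setting: $G$ is a digraph, $D=\{(s_i,t_i)\}_{i\in[k]}$, $E^*\subseteq E(G)$, $P=v_0v_1\cdots v_{|P|}$ a dipath with edges in $E^*$, $|P|\ge1$ its number of edges; reachability w.r.t. $E^*$; every pair has an $s_i$-$t_i$ dipath in $E^*$ meeting $P$. $u\le_P w$ means $u$ appears no later than $w$ on $P$; $P[u,w]$ is the subpath from $u$ to $w$. $a_i$ is the $\le_P$-first vertex of $P$ reachable from $s_i$, $b_i$ the $\le_P$-last vertex of $P$ that can reach $t_i$; $I_i=P[a_i,b_i]$ with $|I_i|$ its number of edges. For each $i$, $P_{s_i}$ is a fixed dipath in $E^*$ from $s_i$ to $a_i$ and $P_{t_i}$ a fixed dipath in $E^*$ from $b_i$ to $t_i$. Groups: $D_0=\{i:a_i=b_i\}$; for $j\in\{1,\dots,\lfloor\log_2|P|\rfloor+1\}$, $D_j=\{i:2^{j-1}\le|I_i|<2^j\}$; for a vertex $v$ of $P$, $D_j^v=\{i\in D_j: v\in I_i\}$; $\mathcal{G}=\{D_0^v: v=a_i=b_i\text{ for some }i\in D_0\}\cup\bigcup_{j\ge1}\{D_j^{v_\ell}: 0\le\ell\le|P|,\ \ell\text{ a multiple of }2^{j-1}\}$. For a nonempty $g\in\mathcal{G}$, $H_g=P[a_{\mathrm{start}},b_{\mathrm{end}}]\cup\bigcup_{i\in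 g}(P_{s_i}\cup P_{t_i})$, where $a_{\mathrm{start}}$ is the $\le_P$-minimum of $\{a_i:i\in g\}$ and $b_{\mathrm{end}}$ the $\le_P$-maximum of $\{b_i:i\in g\}$. *)

From mathcomp Require Import all_boot.
(* Note: 'ia'/'ib' are positions in p; j ranges over 1..floor(log2|P|)+1, l over 0..|P| *)
Set Implicit Arguments. Unset Strict Implicit. Unset Printing Implicit Defensive.

(* A dipath is given by its (nonempty, duplicate-free) vertex sequence.
   P is the vertex sequence p = [:: v_0; ...; v_|P|], so |P| = (size p).-1,
   and vertices of P are identified with their positions (indices) in p. *)

Section OnePath.
Context {V : finType}.

Definition erel (E : {set V * V}) : rel V := fun x y => (x, y) \in E.

Definition reach (E : {set V * V}) (x y : V) : bool := connect (erel E) x y.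

Definition pedges (q : seq V) : seq (V * V) := zip q (behead q).

Definition dipath_seq (E : {set V * V}) (q : seq V) : bool :=
  match q with [::] => false | z :: q' => path (erel E) z q' && uniq q end.

Definition is_dipath (E : {set V * V}) (q : seq V) (x y : V) : bool :=
  [&& dipath_seq E q, head x q == x & last x q == y].

Definition in_VE (E : {set V * V}) (v : V) : bool :=
  [exists u, ((v, u) \in E) || ((u, v) \in E)].

Definition plen (p : seq V) : nat := (size p).-1.

Definition ia (E : {set V * V}) (p : seq V) (s : V) : nat := find (reach E s) p.

(* index in p of b_i : the <=_P-last vertex of P that can reach t *)
Definition ib (E : {set V * V}) (p : seq V) (t : V) : nat :=
  (size p).-1 - find (fun v => reach E v t) (rev p).

Variables (E : {set V * V}) (p : seq V) (k : nat) (s t : 'I_k -> V)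
          (Ps Pt : 'I_k -> seq V).

Let a i := ia E p (s i).
Let b i := ib E p (t i).

(* i \in D_j ; |I_i| = b i - a i *)
Definition inD (j : nat) (i : 'I_k) : bool :=
  if j == 0 then a i == b i else (2 ^ j.-1 <= b i - a i < 2 ^ j).

Definition Dgrp (j l : nat) : {set 'I_k} :=
  [set i | inD j i && (a i <= l <= b i)].

Definition groups : {set {set 'I_k}} :=
  [set Dgrp 0 (a i) | i in [pred i | inD 0 i]] :|:
  [set Dgrp (nat_of_ord jl.1) (nat_of_ord jl.2)
     | jl in [pred jl : 'I_(trunc_log 2 (plen p)).+2 * 'I_(plen p).+1
              | (0 < jl.1) && (2 ^ (nat_of_ord jl.1).-1 %| jl.2)]].

Definition astart (g : {set 'I_k}) : nat := \big[minn/plen p]_(i in g) a i.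
Definition bend (g : {set 'I_k}) : nat := \max_(i in g) b i.

Definition inH_v (g : {set 'I_k}) (x : V) : bool :=
  [exists l : 'I_(size p), (astart g <= l <= bend g) && (nth x p l == x)]
  || [exists i in g, (x \in Ps i) || (x \in Pt i)].

Definition inH_e (g : {set 'I_k}) (e : V * V) : bool :=
  [exists l : 'I_(size p),
      [&& astart g <= l, l < bend g & e == (nth e.1 p l, nth e.1 p l.+1)]]
  || [exists i in g, (e \in pedges (Ps i)) || (e \in pedges (Pt i))].

End OnePath.

From mathcomp Require Import all_boot.
From mathcomp Require Import zify.
Set Implicit Arguments. Unset Strict Implicit.

(* A vertex outside P can lie in H_g only through some P_{s_i} or P_{t_i}
   with i in g, and every vertex x of P_{s_i} has a_x = a_i (resp. every
   vertex of P_{t_i} has b_x = b_i).  A group D_j^{v_l} containing i has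
   2^(j-1) | l and a_i <= l <= b_i < a_i + 2^j, so given a_i (resp. b_i)
   only three values of l are possible.  Hence x meets at most 6 groups per
   level j <= log|P| + 1, and 6 (log|P| + 2) <= 10 log|P| + 12. *)

Lemma find_leq_nth (T : Type) (a : pred T) (s : seq T) x0 i :
  i < size s -> a (nth x0 s i) -> find a s <= i.
Proof.
move=> lt_i_s ai; rewrite leqNgt; apply/negP => /(before_find x0).
by rewrite ai.
Qed.

Lemma eq_find_subpred (T : Type) (a1 a2 : pred T) (s : seq T) x0 :
  subpred a2 a1 -> (find a1 s < size s -> a2 (nth x0 s (find a1 s))) ->
  find a2 s = find a1 s.
Proof.
move=> sub21 a2_at; apply/eqP; rewrite eqn_leq (sub_find sub21) andbT.
have [lt_f_s | ge_f_s] := ltnP (find a1 s) (size s).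
  exact: find_leq_nth lt_f_s (a2_at lt_f_s).
exact: leq_trans (find_size _ _) ge_f_s.
Qed.

Section Windows.
Variable d : nat.
Hypothesis d_gt0 : 0 < d.

Lemma dvdn_window_above a l :
  d %| l -> a <= l -> l < a + d * 2 -> exists2 c, c < 3 & l = (a %/ d + c) * d.
Proof.
move=> /divnK l_eq a_le_l l_lt; exists (l %/ d - a %/ d); last first.
  by rewrite subnKC ?l_eq // leq_div2r.
have : l %/ d <= (a + d * 2) %/ d by apply: leq_div2r; lia.
by rewrite addnC mulnC divnMDl //; lia.
Qed.

Lemma dvdn_window_below b l :
  d %| l -> l <= b -> b < l + d * 2 -> exists2 c, c < 3 & l = (b %/ d - c) * d.
Proof.
move=> /divnK l_eq l_le_b b_lt; exists (b %/ d - l %/ d).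
  have : b %/ d < l %/ d + 2 by rewrite ltn_divLR // mulnDl l_eq; lia.
  lia.
by rewrite subKn ?l_eq // leq_div2r.
Qed.

End Windows.

Section Reachability.
Variable V : finType.
Implicit Types (E : {set V * V}) (p q : seq V).

Lemma dipath_reach E q u w x :
  is_dipath E q u w -> x \in q -> reach E u x && reach E x w.
Proof.
case: q => [|z q] //= /and3P [/andP [q_path _] /eqP /= <- /eqP /= <-] x_in.
rewrite /reach (path_connect q_path) //=.
case/splitPl: x_in q_path => q1 q2 x_last.
rewrite cat_path last_cat => /andP [_ q2_path].
by rewrite -x_last (path_connect q2_path) ?mem_last.
Qed.

Lemma ia_dipath E p q s x :
  is_dipath E q s (nth s p (ia E p s)) -> x \in q -> ia E p x = ia E p s.
Proof.
move=> q_dip /(dipath_reach q_dip) /andP [s_x x_a].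
apply: (eq_find_subpred (x0 := s)) => [v x_v | _] //.
exact: connect_trans s_x x_v.
Qed.

Lemma ib_dipath E p q t x :
  is_dipath E q (nth t p (ib E p t)) t -> x \in q -> ib E p x = ib E p t.
Proof.
move=> q_dip /(dipath_reach q_dip) /andP [b_x x_t]; rewrite /ib.
congr (_ - _); apply: (eq_find_subpred (x0 := t)) => [v v_x | lt_f].
  exact: connect_trans v_x x_t.
rewrite size_rev in lt_f; move: b_x; rewrite /ib nth_rev //.
by rewrite -subn1 -subnDA add1n.
Qed.

Lemma mem_pedges_nth p d l :
  l.+1 < size p -> (nth d p l, nth d p l.+1) \in pedges p.
Proof.
rewrite /pedges; elim: p l => [|u [|w r] IH] [|l] //=; first by rewrite inE eqxx.
by move=> lt_l; rewrite inE (IH l lt_l) orbT.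
Qed.

Lemma mem_pedges_fst p e : e \in pedges p -> e.1 \in p.
Proof.
rewrite /pedges; case: p => [|u r] //=.
elim: r u => [|w r IH] u //=; rewrite inE => /orP [/eqP -> | /IH w_r].
  exact: mem_head.
by rewrite in_cons w_r orbT.
Qed.

End Reachability.

Section Groups.
Variables (V : finType) (E : {set V * V}) (p : seq V) (k : nat)
          (s t : 'I_k -> V).

Let a i := ia E p (s i).
Let b i := ib E p (t i).
Let L := trunc_log 2 (plen p).

Lemma groups_window g i : g \in groups E p s t -> i \in g ->
  exists j l, [/\ j < L.+2, 2 ^ j.-1 %| l, a i <= l <= b i,
                  b i < a i + 2 ^ j.-1 * 2 & g = Dgrp E p s t j l].
Proof.
(* At level 0, [2 ^ j.-1 = 1] and the window degenerates to [l = a i = b i]. *)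
case/setUP => /imsetP [].
- move=> i0 _ ->; rewrite inE /inD /= => /andP [/eqP ab /andP [a_le le_b]].
  exists 0, (a i0); split=> //; rewrite /a /b; lia.
- move=> [j l]; rewrite inE /= => /andP [j_gt0 dvd_l] ->.
  have two_j : 2 ^ j = 2 ^ j.-1 * 2 by rewrite -expnSr prednK.
  rewrite inE /inD eqn0Ngt j_gt0 two_j /= => /andP [/andP [_ lt_j] a_l_b].
  exists j, l; split=> //; move: a_l_b lt_j; rewrite /a /b; lia.
Qed.

(* Indices c < 3 give the candidates above al, indices c >= 3 those below be. *)
Definition near_group (al be : nat) (jc : 'I_L.+2 * 'I_6) : {set 'I_k} :=
  let d := 2 ^ (nat_of_ord jc.1).-1 in
  Dgrp E p s t jc.1
    (if jc.2 < 3 then (al %/ d + jc.2) * d else (be %/ d - (jc.2 - 3)) * d).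

Lemma groups_near g i al be : g \in groups E p s t -> i \in g ->
  a i = al \/ b i = be -> exists jc, g = near_group al be jc.
Proof.
move=> /groups_window /[apply] [[j [l [lt_j dvd_l /andP [a_l l_b] b_lt ->]]]].
have d_gt0 : 0 < 2 ^ j.-1 by rewrite expn_gt0.
case=> [<- | <-].
- have [c lt_c3 ->] := dvdn_window_above d_gt0 dvd_l a_l (leq_ltn_trans l_b b_lt).
  have lt_c6 : c < 6 by apply: leq_trans lt_c3 _.
  by exists (Ordinal lt_j, Ordinal lt_c6); rewrite /near_group /= lt_c3.
- have b_lt' : b i < l + 2 ^ j.-1 * 2 by apply: leq_trans b_lt _; rewrite leq_add2r.
  have [c lt_c3 ->] := dvdn_window_below d_gt0 dvd_l l_b b_lt'.
  have lt_c6 : 3 + c < 6 by rewrite ltn_add2l.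
  exists (Ordinal lt_j, Ordinal lt_c6).
  by rewrite /near_group /= addKn.
Qed.

Lemma card_groups_anchored al be :
  #|[set g in groups E p s t | [exists i in g, (a i == al) || (b i == be)]]|
    <= 6 * L.+2.
Proof.
apply: (@leq_trans #|near_group al be @: setT|); last first.
  by rewrite (leq_trans (leq_imset_card _ _)) // cardsT card_prod !card_ord mulnC.
apply/subset_leq_card/subsetP => g; rewrite inE => /andP [g_in].
case/exists_inP => i i_g /orP anchored; apply/imsetP.
have [|jc ->] := groups_near g_in i_g (al := al) (be := be); last by exists jc.
by case: anchored => /eqP; [left | right].
Qed.

Variables (Ps Pt : 'I_k -> seq V).
Hypothesis Ps_dipath : forall i, is_dipath E (Ps i) (s i) (nth (s i) p (a i)).
Hypothesis Pt_dipath : forall i, is_dipath E (Pt i) (nth (t i) p (b i)) (t i).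

Lemma card_groups_meeting x :
  #|[set g in groups E p s t | [exists i in g, (x \in Ps i) || (x \in Pt i)]]|
    <= 6 * L.+2.
Proof.
apply: leq_trans (card_groups_anchored (ia E p x) (ib E p x)).
apply/subset_leq_card/subsetP => g; rewrite !inE => /andP [-> /exists_inP [i i_g x_in]].
apply/exists_inP; exists i => //.
case/orP: x_in => [/(ia_dipath (Ps_dipath i)) | /(ib_dipath (Pt_dipath i))] ->.
  by rewrite eqxx.
by rewrite eqxx orbT.
Qed.

Lemma inH_v_off_path g x : x \notin p -> inH_v E p s t Ps Pt g x ->
  [exists i in g, (x \in Ps i) || (x \in Pt i)].
Proof.
move=> x_p /orP [/existsP [l /andP [_ /eqP x_eq]] | //].
by rewrite -x_eq mem_nth in x_p.
Qed.

Lemma inH_e_off_path g e : e \notin pedges p -> inH_e E p s t Ps Pt g e ->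
  [exists i in g, (e.1 \in Ps i) || (e.1 \in Pt i)].
Proof.
move=> e_p /orP [/existsP [l /and3P [_ l_b /eqP e_eq]] | ].
  have bend_le : bend E p t g <= (size p).-1.
    by apply/bigmax_leqP => i _; rewrite /ib leq_subr.
  have lt_l : l.+1 < size p by move: (ltn_ord l) l_b bend_le; lia.
  by rewrite e_eq mem_pedges_nth in e_p.
case/exists_inP => i i_g e_in; apply/exists_inP; exists i => //.
by case/orP: e_in => /mem_pedges_fst ->; rewrite ?orbT.
Qed.

End Groups.

Theorem mainTheorem13 (V : finType) (EG Estar : {set V * V}) (p : seq V)
    (k : nat) (s t : 'I_k -> V) (Ps Pt : 'I_k -> seq V) :
  Estar \subset EG ->
  dipath_seq Estar p ->
  1 <= plen p ->
  (forall i, exists q, is_dipath Estar q (s i) (t i) && has (fun v => v \in p) q) ->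
  (forall i, is_dipath Estar (Ps i) (s i) (nth (s i) p (ia Estar p (s i)))) ->
  (forall i, is_dipath Estar (Pt i) (nth (t i) p (ib Estar p (t i))) (t i)) ->
  (forall x : V, in_VE Estar x -> x \notin p ->
     #|[set g in groups Estar p s t | (g != set0) && inH_v Estar p s t Ps Pt g x]|
       <= 10 * trunc_log 2 (plen p) + 12)
  /\
  (forall e : V * V, e \in Estar -> e \notin pedges p ->
     #|[set g in groups Estar p s t | (g != set0) && inH_e Estar p s t Ps Pt g e]|
       <= 10 * trunc_log 2 (plen p) + 12).
Proof.
(* Only the junction paths matter. *)
move=> _ _ _ _ Ps_dipath Pt_dipath.
have six_levels : 6 * (trunc_log 2 (plen p)).+2 <= 10 * trunc_log 2 (plen p) + 12.
  by lia.
have meeting x := leq_trans (card_groups_meeting Ps_dipath Pt_dipath x) six_levels.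
split=> [x _ x_p | e _ e_p].
- apply/(leq_trans _ (meeting x))/subset_leq_card/subsetP => g.
  by rewrite !inE => /andP [-> /andP [_ /(inH_v_off_path x_p)]].
- apply/(leq_trans _ (meeting e.1))/subset_leq_card/subsetP => g.
  by rewrite !inE => /andP [-> /andP [_ /(inH_e_off_path e_p)]].
Qed.
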